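(* Let $G$ be a graph with an edge $e=t_1t_2$. Then $G$ has a fundamental rooted cycle basis (a spanning tree $T$ such that every fundamental cycle of $T$ contains $e$) if and only if there exist two vertex sets $S_1,S_2$ such that: (i) $S_1$ and $S_2$ partition $V(G)$; (ii) $t_1$ and $t_2$ belong to different sets of the partition; (iii) for each $i\in\{1,2\}$, the subgraph induced by $S_i$ is connected; (iv) for each $i\in\{1,2\}$, the subgraph induced by $S_i$ is acyclic.
   Context: For a spanning tree $T$, the fundamental cycle of a non-tree edge $f$ is $f$ together with the unique path in $T$ connecting the endpoints of $f$; the fundamental cycle basis of $T$ consists of all fundamental cycles, and it is rooted at $e$ if all of them contain $e$. *)

(* Finite simple graphs: a symmetric irreflexive relation
   G on a finType V.  Subgraphs (edge sets) are symmetric subrelations. *)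
From mathcomp Require Import all_boot.
Set Implicit Arguments.
Unset Strict Implicit.
Unset Printing Implicit Defensive.

Definition is_cycle (V : finType) (E : rel V) (c : seq V) : bool :=
  ucycleb E c && (2 < size c).

Definition acyclic (V : finType) (E : rel V) : Prop :=
  forall c : seq V, ~~ is_cycle E c.

Definition induced (V : finType) (G : rel V) (S : {set V}) : rel V :=
  fun x y => [&& G x y, x \in S & y \in S].

Definition connected_on (V : finType) (E : rel V) (S : {set V}) : Prop :=
  forall x y, x \in S -> y \in S -> connect E x y.

Definition spanning_tree (V : finType) (G T : rel V) : Prop :=
  subrel T G /\ symmetric T /\ (forall x y, connect T x y) /\ acyclic T.

Definition edge_in_cycle (V : finType) (a b : V) (c : seq V) : bool :=
  ((a, b) \in zip c (rot 1 c)) || ((b, a) \in zip c (rot 1 c)).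

(* The fundamental cycle of a non-tree edge uv of G is  u :: p  where
   u :: p is the (unique) T-path from u to v (closed by the edge vu). *)
Definition fcb_rooted_at (V : finType) (G T : rel V) (t1 t2 : V) : Prop :=
  forall u v, G u v -> ~~ T u v ->
  forall p : seq V, path T u p -> uniq (u :: p) -> last u p = v ->
  edge_in_cycle t1 t2 (u :: p).

From mathcomp Require Import all_boot.

(* Given a spanning tree T rooted at t1t2, cut the first edge t1h of the tree
   path from t1 to t2.  The two components of T - t1h separate t1 from t2, and
   every edge of G inside one component is a tree edge: a uniq tree path
   between two vertices on the same side never crosses t1h, so the fundamental
   cycle of a non-tree edge inside a component would miss t1t2.
   Conversely, if G[S1] and G[S2] are trees, adding the bridge t1t2 gives a
   spanning tree of G; a non-tree edge of G crosses between S1 and S2, so its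
   fundamental cycle has to cross back through t1t2. *)

Set Implicit Arguments.
Unset Strict Implicit.
Unset Printing Implicit Defensive.

Section RootedCycleBasis.

Variable V : finType.
Implicit Types (E G T : rel V) (a b x y : V) (p : seq V).

Definition uedge a b : rel V :=
  [rel x y | (x == a) && (y == b) || (x == b) && (y == a)].

Definition avoids a b : V -> seq V -> bool := path [rel x y | ~~ uedge a b x y].

Definition del_edge E a b : rel V := [rel x y | E x y && ~~ uedge a b x y].

Lemma uedge_sym a b : symmetric (uedge a b).
Proof. by move=> x y; rewrite /uedge /= orbC; congr (_ || _); rewrite andbC. Qed.

Lemma del_edge_sym E a b : symmetric E -> symmetric (del_edge E a b).
Proof. by move=> Esym x y; rewrite /del_edge /= Esym uedge_sym. Qed.

Lemma path_del_edge E a b x p :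
  path (del_edge E a b) x p = path E x p && avoids a b x p.
Proof. exact: path_relI. Qed.

Lemma avoids_notin a b x p :
  (a \notin x :: p) || (b \notin x :: p) -> avoids a b x p.
Proof.
elim: p x => //= y p IHp x; rewrite !inE !negb_or.
case/orP=> /and3P[nx ny np]; rewrite IHp ?inE ?negb_or ?ny ?np ?orbT // andbT;
  by rewrite !(eq_sym x) !(eq_sym y) (negPf nx) (negPf ny) ?andbF.
Qed.

Lemma avoidsE a b x p :
  avoids a b x p = ((a, b) \notin zip (x :: p) p) && ((b, a) \notin zip (x :: p) p).
Proof.
elim: p x => //= y p IHp x; rewrite IHp !inE !negb_or !xpair_eqE.
by rewrite !(eq_sym x) !(eq_sym y) -!andbA; do !bool_congr.
Qed.

Lemma zip_cons_rcons x p z :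
  zip (x :: p) (rcons p z) = rcons (zip (x :: p) p) (last x p, z).
Proof. by elim: p x => //= y p IHp x; rewrite IHp. Qed.

Lemma edge_in_cycle_cons a b x p :
  edge_in_cycle a b (x :: p) = ~~ avoids a b x p || uedge a b (last x p) x.
Proof.
rewrite /edge_in_cycle rot1_cons zip_cons_rcons !mem_rcons !inE !xpair_eqE avoidsE.
rewrite /= negb_and !negbK !(eq_sym a) !(eq_sym b).
by rewrite /uedge /= -!orbA; do !bool_congr.
Qed.

Lemma path_relU_avoids E a b x p :
  path (relU E (uedge a b)) x p -> avoids a b x p -> path E x p.
Proof.
move=> Fp av; have : path (del_edge (relU E (uedge a b)) a b) x p.
  by rewrite path_del_edge Fp.
by apply: sub_path => u v /andP[/orP[// | ->]].
Qed.

Lemma path_relU_notin E a b x p :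
  path (relU E (uedge a b)) x p -> a \notin x :: p -> path E x p.
Proof. by move=> Fp nap; apply: path_relU_avoids Fp _; rewrite avoids_notin ?nap. Qed.

Lemma acyclic_sub E E' : subrel E E' -> acyclic E' -> acyclic E.
Proof.
move=> EE' E'ac c; apply: contraNN (E'ac c).
by rewrite /is_cycle /ucycleb => /andP[/andP[/(sub_cycle EE') -> ->] ->].
Qed.

Lemma connected_component_induced G R c :
  symmetric G -> subrel R G ->
  connected_on (induced G [set y | connect R c y]) [set y | connect R c y].
Proof.
move=> Gsym RG; set C := [set y | connect R c y].
have Csym : connect_sym (induced G C).
  by apply: sym_connect_sym => x y; rewrite /induced Gsym (andbC (x \in C)).
have reach x : connect R c x -> connect (induced G C) c x.
  case/connectP=> p Rp ->; apply/connectP; exists p => //.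
  have Cp : all [in C] (c :: p) by apply/allP=> z /(path_connect Rp); rewrite inE.
  by apply: (sub_in_path _ Cp Rp) => u v uC vC /RG Guv; rewrite /induced Guv uC vC.
move=> x y; rewrite !inE => cx cy.
by apply: connect_trans (reach y cy); rewrite Csym reach.
Qed.

Lemma acyclic_add_bridge E a b :
  symmetric E -> acyclic E -> ~~ connect E a b -> acyclic (relU E (uedge a b)).
Proof.
move=> Esym Eac nEab; set F := relU E (uedge a b).
have nab : a != b by apply: contraNneq nEab => ->.
move=> c; apply/negP=> /andP[/andP[Fc uc] szc].
have [ac | nac] := boolP (a \in c); last first.
  case: c nac Fc uc szc => // x p nac Fc uc szc.
  apply: (negP (Eac (x :: p))); rewrite /is_cycle /ucycleb uc szc !andbT.
  apply: path_relU_notin Fc _; rewrite -rcons_cons mem_rcons in_cons (negPf nac) orbF.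
  by apply: contra nac => /eqP->; apply: mem_head.
have [i q cE] := rot_to ac.
move: Fc uc szc; rewrite -(rot_cycle i) -(rot_uniq i) -(size_rot i) cE.
case: q {cE} => [|y [|z q]] // Fc uc _.
move: Fc; rewrite /cycle rcons_path => /andP[/andP[Fay Fyq] Fla].
set l := last z q; have {}Fla : F l a := Fla.
have {}Fyq : path F y (z :: q) := Fyq.
have Eyq : path E y (z :: q) by apply: path_relU_notin Fyq _; case/andP: uc.
have Eyl : connect E y l by apply/connectP; exists (z :: q).
have nly : l != y.
  apply: contraTneq (mem_last z q) => ly; rewrite -/l ly.
  by case/and3P: uc.
have Fa u : F a u = E a u || (u == b).
  by rewrite /F /uedge /= eqxx (negPf nab) /= orbF.
have Fa' u : F u a = E u a || (u == b).
  by rewrite /F /uedge /= eqxx (negPf nab) andbF andbT.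
have {}Fay : E a y || (y == b) by rewrite -Fa.
have {}Fla : E l a || (l == b) by rewrite -Fa'.
have [yb | nyb] := eqVneq y b.
  rewrite -yb (negPf nly) orbF in Fla.
  apply: (negP nEab); rewrite (sym_connect_sym Esym) -yb.
  exact: connect_trans Eyl (connect1 Fla).
rewrite (negPf nyb) orbF in Fay.
have [lb | nlb] := eqVneq l b.
  by apply: (negP nEab); rewrite -lb; apply: connect_trans (connect1 Fay) Eyl.
rewrite (negPf nlb) orbF in Fla.
apply: (negP (Eac [:: a, y, z & q])); rewrite /is_cycle /ucycleb uc andbT /cycle rcons_path.
by rewrite -andbA; apply/and3P; split=> //; apply/andP.
Qed.

Section CutTreeEdge.

Variables (T : rel V) (a b : V).
Hypotheses (Tsym : symmetric T) (Tac : acyclic T) (Tconn : forall x y, connect T x y).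
Hypotheses (Tab : T a b) (nab : a != b).

Local Notation Tcut := (del_edge T a b).

Let cut_sym : connect_sym Tcut := sym_connect_sym (del_edge_sym a b Tsym).

Lemma not_connect_cut : ~~ connect Tcut a b.
Proof.
apply/negP=> /connectP[p0 p0cut p0b].
case: (shortenP p0cut) p0b => p; rewrite path_del_edge => /andP[Tp avp] up _ pb.
have p2 : 1 < size p.
  case: p pb avp {Tp up} => [|y [|z q]] //= yb; first by move: nab; rewrite yb eqxx.
  by rewrite yb /uedge /= !eqxx.
apply: (negP (Tac (a :: p))); rewrite /is_cycle /ucycleb up andbT.
by rewrite /cycle rcons_path Tp -pb Tsym Tab.
Qed.

Lemma connect_cut_cover v : connect Tcut a v || connect Tcut b v.
Proof.
pose P := [pred v | connect Tcut a v || connect Tcut b v].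
have Pcl : closed T P.
  move=> x y Txy; have [/orP[]/andP[/eqP-> /eqP->] | nuxy] := boolP (uedge a b x y).
  - by rewrite !inE !connect0 !orbT.
  - by rewrite !inE !connect0 !orbT.
  have Tcxy : Tcut x y by rewrite /del_edge /= Txy nuxy.
  by rewrite !inE /= !(same_connect_r cut_sym (connect1 Tcxy)).
by rewrite -[_ || _]/(v \in P) -(closed_connect Pcl (Tconn a v)) inE /= connect0.
Qed.

Lemma connect_cut_bE v : connect Tcut b v = ~~ connect Tcut a v.
Proof.
apply/idP/idP=> [bv | /negPf av]; last by have := connect_cut_cover v; rewrite av.
by apply: contraNN not_connect_cut => av; apply: connect_trans av _; rewrite cut_sym.
Qed.

Lemma path_cut_side x p :
  path T x p -> uniq (x :: p) -> ~~ avoids a b x p ->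
  connect Tcut a x != connect Tcut a (last x p).
Proof.
elim: p x => //= y p IHp x /andP[Txy Tp] /andP[xp up].
have [uxy | nuxy] := boolP (uedge a b x y); last first.
  have Tcxy : Tcut x y by rewrite /del_edge /= Txy nuxy.
  by rewrite (same_connect_r cut_sym (connect1 Tcxy)) /=; apply: IHp.
move=> _; have avp : avoids a b y p.
  by apply: avoids_notin; case/orP: uxy => /andP[/eqP xE _]; rewrite -xE xp ?orbT.
have Tcp : path Tcut y p by rewrite path_del_edge Tp avp.
rewrite -(same_connect_r cut_sym (path_connect Tcp (mem_last y p))).
by case/orP: uxy => /andP[/eqP-> /eqP->]; rewrite connect0 (negPf not_connect_cut).
Qed.

Lemma rooted_cut_same_side (G : rel V) (t1 t2 : V) :
  fcb_rooted_at G T t1 t2 -> connect Tcut a t1 -> ~~ connect Tcut a t2 ->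
  forall x y, G x y -> connect Tcut a x = connect Tcut a y -> T x y.
Proof.
move=> rooted t1a t2b x y Gxy sxy; apply/contraT => nTxy.
have /connectP[p0 Tp0 yE] := Tconn x y.
case: (shortenP Tp0) yE => p Tp up _ yE; subst y.
have av : avoids a b x p.
  by apply/negPn/negP=> /(path_cut_side Tp up); rewrite sxy eqxx.
have Tcp : path Tcut x p by rewrite path_del_edge Tp av.
have side z : z \in x :: p -> connect Tcut a z = connect Tcut a x.
  by move=> /(path_connect Tcp) xz; rewrite (same_connect_r cut_sym xz).
move: (rooted x _ Gxy nTxy p Tp up erefl); rewrite edge_in_cycle_cons.
case/orP=> [uses | /orP[]/andP[/eqP t1E /eqP t2E]].
- have /andP[t1p t2p] : (t1 \in x :: p) && (t2 \in x :: p).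
    by apply: contraR uses; rewrite negb_and => /avoids_notin->.
  by move: t2b; rewrite side // -(side t1) // t1a.
- by move: t2b; rewrite -t2E sxy t1E t1a.
- by move: t2b; rewrite -t1E -sxy t2E t1a.
Qed.

End CutTreeEdge.


Definition induces_tree G (S : {set V}) :=
  connected_on (induced G S) S /\ acyclic (induced G S).

Lemma rooted_spanning_tree_cut G T t1 t2 :
  symmetric G -> irreflexive G -> G t1 t2 -> spanning_tree G T -> fcb_rooted_at G T t1 t2 ->
  exists S : {set V}, [/\ t1 \in S, t2 \notin S, induces_tree G S & induces_tree G (~: S)].
Proof.
move=> Gsym Girr Gt12 [TG [Tsym [Tconn Tac]]] rooted.
have /connectP[p0 Tp0 t2E] := Tconn t1 t2.
case: (shortenP Tp0) t2E => [[|h q]] Tp up _ t2E; first by rewrite t2E Girr in Gt12.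
case/andP: Tp => Tt1h Thq; have {}Thq : path T h q := Thq.
case/andP: up; rewrite inE negb_or => /andP[nt1h t1q] _.
pose S := [set v | connect (del_edge T t1 h) t1 v].
have cutb := connect_cut_bE Tsym Tac Tconn Tt1h nt1h.
have t2S : t2 \notin S.
  rewrite inE -cutb; apply/connectP; exists q => //.
  by rewrite path_del_edge Thq avoids_notin // inE negb_or nt1h t1q.
have CS : ~: S = [set v | connect (del_edge T t1 h) h v].
  by apply/setP=> v; rewrite !inE cutb.
have sides x y : G x y -> (x \in S) = (y \in S) -> T x y.
  rewrite !inE; apply: (rooted_cut_same_side Tsym Tac Tconn Tt1h nt1h rooted) => //.
  by rewrite inE in t2S.
have cutG : subrel (del_edge T t1 h) G by move=> x y /andP[/TG].
exists S; split; first by rewrite inE.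
- exact: t2S.
- split; first exact: connected_component_induced Gsym cutG.
  by apply: acyclic_sub Tac => x y /and3P[Gxy xS yS]; apply: sides; rewrite ?xS ?yS.
- split; first by rewrite CS; apply: connected_component_induced Gsym cutG.
  apply: acyclic_sub Tac => x y /and3P[Gxy xS yS]; apply: sides => //.
  by rewrite !inE in xS yS *; rewrite (negPf xS) (negPf yS).
Qed.

Definition sides_graph G (S : {set V}) : rel V :=
  [rel x y | G x y && ((x \in S) == (y \in S))].

Lemma connect_sides_graph G (S : {set V}) x y :
  connect (sides_graph G S) x y -> (x \in S) = (y \in S).
Proof. by apply: closed_connect => u v /andP[_ /eqP]. Qed.

Lemma acyclic_sides_graph G (S : {set V}) :
  acyclic (induced G S) -> acyclic (induced G (~: S)) -> acyclic (sides_graph G S).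
Proof.
move=> acS acCS [|x p] //; apply/negP=> /andP[/andP[cyc up] sz].
have side z : z \in x :: p -> (z \in S) = (x \in S).
  move=> zp; apply/esym/connect_sides_graph/(path_connect cyc).
  by rewrite -rcons_cons mem_rcons inE zp orbT.
have cycA (A : {set V}) : {subset x :: p <= A} -> is_cycle (induced G A) (x :: p).
  move=> pA; rewrite /is_cycle /ucycleb up sz !andbT.
  apply: (sub_in_cycle _ (introT allP pA) cyc) => u v uA vA /andP[Guv _].
  by rewrite /induced Guv uA vA.
have [xS | nxS] := boolP (x \in S).
  by apply: (negP (acS (x :: p))); apply: cycA => z /side; rewrite xS.
by apply: (negP (acCS (x :: p))); apply: cycA => z /side zS; rewrite inE zS.
Qed.

Lemma split_rooted_spanning_tree G (S : {set V}) a b :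
  symmetric G -> G a b -> a \in S -> b \notin S ->
  induces_tree G S -> induces_tree G (~: S) ->
  exists T, spanning_tree G T /\ fcb_rooted_at G T a b.
Proof.
move=> Gsym Gab aS bS [connS acS] [connCS acCS].
set F := sides_graph G S; set T := relU F (uedge a b).
have Fsym : symmetric F by move=> x y; rewrite /F /sides_graph /= Gsym eq_sym.
have Tsym : symmetric T by move=> x y; rewrite /T /= Fsym uedge_sym.
have nFab : ~~ connect F a b by apply/negP=> /connect_sides_graph; rewrite aS (negPf bS).
have indS : subrel (induced G S) (connect T).
  move=> x y /and3P[Gxy xS yS].
  by apply/connect1/orP; left; rewrite /F /sides_graph /= Gxy xS yS.
have indCS : subrel (induced G (~: S)) (connect T).
  move=> x y /and3P[Gxy]; rewrite !inE => /negPf xS /negPf yS.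
  by apply/connect1/orP; left; rewrite /F /sides_graph /= Gxy xS yS.
have toa v : connect T v a.
  have [vS | nvS] := boolP (v \in S); first exact: connect_sub indS _ _ (connS v a vS aS).
  have vb : connect T v b by apply: connect_sub indCS _ _ (connCS v b _ _); rewrite inE.
  by apply: connect_trans vb (connect1 _); rewrite /T /uedge /= !eqxx /= !orbT.
exists T; split; first split.
  by move=> x y /orP[/andP[]// | /orP[]/andP[/eqP-> /eqP->]]; rewrite // Gsym.
split=> //; split.
  by move=> x y; apply: connect_trans (toa x) _; rewrite (sym_connect_sym Tsym).
  exact: acyclic_add_bridge (acyclic_sides_graph acS acCS) nFab.
move=> u v Guv nTuv p Tp up vE; rewrite edge_in_cycle_cons; apply/orP; left.
apply/negP=> av; have Fp := path_relU_avoids Tp av.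
move: nTuv; rewrite /T /F /sides_graph /= Guv -vE.
by rewrite (connect_sides_graph (path_connect Fp (mem_last u p))) eqxx.
Qed.

End RootedCycleBasis.

Theorem mainTheorem15 (V : finType) (G : rel V)
    (Gsym : symmetric G) (Girr : irreflexive G) (t1 t2 : V) (He : G t1 t2) :
  (exists T : rel V, spanning_tree G T /\ fcb_rooted_at G T t1 t2) <->
  (exists S1 S2 : {set V},
     [/\ S1 :|: S2 = setT /\ S1 :&: S2 = set0,
         (t1 \in S1 /\ t2 \in S2) \/ (t1 \in S2 /\ t2 \in S1),
         connected_on (induced G S1) S1 /\ connected_on (induced G S2) S2
       & acyclic (induced G S1) /\ acyclic (induced G S2)]).
Proof.
split=> [[T [Ttree rooted]] | [S1 [S2 [[S12U S12I] t12 [conn1 conn2] [ac1 ac2]]]]].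
  have [S [t1S t2S [connS acS] [connCS acCS]]] :=
    rooted_spanning_tree_cut Gsym Girr He Ttree rooted.
  exists S, (~: S); split=> //; first by rewrite setUCr setICr.
  by left; rewrite inE t2S.
have S2E : S2 = ~: S1.
  apply/setP=> v; move/setP/(_ v): S12U; move/setP/(_ v): S12I.
  by rewrite !inE; case: (v \in S1); case: (v \in S2).
subst S2; case: t12 => [[t1S t2S] | [t1S t2S]].
  by apply: split_rooted_spanning_tree Gsym He t1S _ (conj conn1 ac1) (conj conn2 ac2);
    rewrite -in_setC.
apply: split_rooted_spanning_tree Gsym He t1S _ (conj conn2 ac2) _.
  by rewrite in_setC negbK.
by rewrite setCK.
Qed.
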